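(* Let $P$ be a finite poset and $R$ a consistent restriction function on $P$. Let $H_\Gamma:\Gamma(P,R)\to\mathbb{Z}$ be the map $(p,k)\mapsto k$. Then there is a bijection $\varphi:\mathrm{Inc}^R(P)\to J(\Gamma(P,R))$ such that $\varphi\circ\mathrm{IncPro}=\mathrm{TogPro}_{H_\Gamma}\circ\varphi$.
   Context: A restriction function on $P$ assigns to each $p$ a nonempty finite $R(p)\subseteq\mathbb{Z}$; $\mathrm{Inc}^R(P)$ is the set of $f:P\to\mathbb{Z}$ with $f(p)\in R(p)$ and $p_1<p_2\Rightarrow f(p_1)<f(p_2)$. $R$ is consistent if for every cover $x\lessdot y$ in $P$, $\min R(x)<\min R(y)$ and $\max R(x)<\max R(y)$. $R(p)^*=R(p)\setminus\{\max R(p)\}$; $R(p)_{>k}$ (resp. $R(p)_{<k}$) is the smallest (resp. largest) element of $R(p)$ greater (resp. less) than $k$. $\Gamma(P,R)$ is the poset on $\{(p,k):p\in P, k\in R(p)^*\}$ whose order is the reflexive–transitive closure of the relation $(p_1,k_1)\lessdot(p_2,k_2)$, holding iff either (1) $p_1=p_2$ and $R(p_1)_{>k_2}=k_1$; or (2) $p_1\lessdot p_2$ in $P$, $k_1=R(p_1)_{<k_2}$, $k_1\neq\max R(p_1)$, and no $k\in R(p_2)$ with $k>k_2$ has $R(p_1)_{<k}=k_1$. Generalized Bender–Knuth involution: for $i\in\mathbb{Z}$ and $f\in\mathrm{Inc}^R(P)$, $\rho_i(f)(p)=R(p)_{>i}$ if $f(p)=i$ and the labeling obtained from $f$ by changing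 only the value at $p$ to $R(p)_{>i}$ lies in $\mathrm{Inc}^R(P)$; $\rho_i(f)(p)=i$ if $f(p)=R(p)_{>i}$ and the labeling obtained by changing only the value at $p$ to $i$ lies in $\mathrm{Inc}^R(P)$; otherwise $\rho_i(f)(p)=f(p)$. $\mathrm{IncPro}$ applies $\rho_i$ for all $i\in\mathbb{Z}$ in increasing order of $i$ (only finitely many act nontrivially), i.e. $\mathrm{IncPro}=\cdots\circ\rho_3\circ\rho_2\circ\rho_1\circ\cdots$. For a finite poset $Q$, $J(Q)$ is its set of order ideals. For $x\in Q$ the toggle $t_x:J(Q)\to J(Q)$ sends $I$ to $I\cup\{x\}$ if $x\notin I$ and this is an order ideal, to $I\setminus\{x\}$ if $x\in I$ and this is an order ideal, and to $I$ otherwise. For $H:Q\to\mathbb{Z}$ with $H(x)\ne H(y)$ whenever $x\lessdot y$ (a toggle order), $T_H^i$ is the product of the (pairwise commuting) toggles $t_x$ with $H(x)=i$, and $\mathrm{TogPro}_H$ applies $T_H^i$ in increasing order of $i$: $\mathrm{TogPro}_H=\cdots T_H^{2}T_H^1T_H^0T_H^{-1}T_H^{-2}\cdots$ (composition right to left). *)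

From HB Require Import structures.
From mathcomp Require Import all_boot all_order all_algebra.
From mathcomp Require Import finmap.
Set Implicit Arguments. Unset Strict Implicit. Unset Printing Implicit Defensive.
Import Order.TTheory GRing.Theory Num.Theory.
Local Open Scope ring_scope.

Section Defs.
Variables (d : Order.disp_t) (P : finPOrderType d).

Definition pcover (x y : P) : bool :=
  ((x < y)%O) && ~~ [exists q : P, ((x < q)%O) && ((q < y)%O)].

(** max and min of a finite set of integers (meaningful when it is nonempty) *)
Definition maxR (A : {fset int}) : int :=
  \big[Num.max/head 0 (enum_fset A)]_(x <- enum_fset A) x.
Definition minR (A : {fset int}) : int :=
  \big[Num.min/head 0 (enum_fset A)]_(x <- enum_fset A) x.

Definition succR (A : {fset int}) (k : int) : option int :=
  let s := [seq x <- enum_fset A | k < x] in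
  if s is x0 :: _ then Some (\big[Num.min/x0]_(x <- s) x) else None.
Definition predR (A : {fset int}) (k : int) : option int :=
  let s := [seq x <- enum_fset A | x < k] in
  if s is x0 :: _ then Some (\big[Num.max/x0]_(x <- s) x) else None.

Variable R : P -> {fset int}.

Definition restriction : Prop := forall p : P, R p != fset0.

Definition consistent : Prop :=
  forall x y : P, pcover x y ->
    minR (R x) < minR (R y) /\ maxR (R x) < maxR (R y).

Definition inc_lab (f : {ffun P -> int}) : bool :=
  [forall p, f p \in R p] &&
  [forall p1, forall p2, ((p1 < p2)%O) ==> (f p1 < f p2)].

Definition upd (f : {ffun P -> int}) (p : P) (v : int) : {ffun P -> int} :=
  [ffun q => if q == p then v else f q].

Definition rho (i : int) (f : {ffun P -> int}) : {ffun P -> int} :=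
  [ffun p =>
     match succR (R p) i with
     | Some j =>
         if (f p == i) && inc_lab (upd f p j) then j
         else if (f p == j) && inc_lab (upd f p i) then i
         else f p
     | None => f p
     end].

(** the integer interval [lo, hi] containing all values of all R p;
    rho_i with i outside it acts trivially on Inc^R(P) *)
Definition lo : int := \big[Num.min/0]_(p : P) minR (R p).
Definition hi : int := \big[Num.max/0]_(p : P) maxR (R p).
Definition irange : seq int := [seq lo + (n%:Z) | n <- iota 0 (absz (hi - lo)).+1].

Definition IncPro (f : {ffun P -> int}) : {ffun P -> int} :=
  foldl (fun g i => rho i g) f irange.

Definition gamma_seq : seq (P * int) :=
  flatten [seq [seq (p, k) | k <- [seq k <- enum_fset (R p) | k != maxR (R p)]]
          | p <- enum P].

Definition Gamma : finType := seq_sub gamma_seq.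

Definition gcov (x y : Gamma) : bool :=
  let: (p1, k1) := ssval x in
  let: (p2, k2) := ssval y in
  ((p1 == p2) && (succR (R p1) k2 == Some k1)) ||
  [&& pcover p1 p2, predR (R p1) k2 == Some k1, k1 != maxR (R p1) &
      ~~ has (fun k => (k2 < k) && (predR (R p1) k == Some k1)) (enum_fset (R p2))].

Definition gle (x y : Gamma) : bool := connect gcov x y.

Definition is_ideal (I : {set Gamma}) : bool :=
  [forall x, forall y, (gle x y && (y \in I)) ==> (x \in I)].

Definition toggle (x : Gamma) (I : {set Gamma}) : {set Gamma} :=
  if (x \notin I) && is_ideal (x |: I) then x |: I
  else if (x \in I) && is_ideal (I :\ x) then I :\ x
  else I.

Definition HGamma (x : Gamma) : int := (ssval x).2.

(** T^i_H: product of the (commuting) toggles t_x with H x = i *)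
Definition Tog (H : Gamma -> int) (i : int) (I : {set Gamma}) : {set Gamma} :=
  foldl (fun J x => toggle x J) I [seq x <- enum Gamma | H x == i].

(** TogPro_H: T^i_H applied in increasing order of i (T^i is the identity
    when i is not a value of H) *)
Definition TogPro (H : Gamma -> int) (I : {set Gamma}) : {set Gamma} :=
  foldl (fun J i => Tog H i J) I
        (sort (fun a b : int => a <= b) (undup [seq H x | x <- enum Gamma])).

End Defs.

(* An R-increasing labeling f corresponds to the order ideal {(p, k) | f p <= k} of
   Gamma(P, R); conversely f p is read off an ideal as the least level it occupies over p
   (max R(p) over an empty fiber), and consistency of R is exactly what makes the labeling
   recovered in this way increasing across the covers of P.  Under this correspondence the
   toggle of (p, i) is the local Bender-Knuth move of rho_i at p.  The elements of level i
   lie over pairwise distinct points, and the move at p only depends on the values at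
   points comparable to p, which the other moves of rho_i cannot change in a way visible
   from p; so performing the toggles of T^i one at a time reproduces rho_i, and composing
   over increasing i turns IncPro into TogPro. *)

From HB Require Import structures.
From mathcomp Require Import all_boot all_order all_algebra.
From mathcomp Require Import finmap.
From mathcomp Require Import zify.
Import Order.TTheory GRing.Theory Num.Theory.
Set Implicit Arguments. Unset Strict Implicit. Unset Printing Implicit Defensive.

Local Open Scope ring_scope.

Section BigMinMaxMem.
Context {disp : Order.disp_t} {T : orderType disp}.

Lemma bigmin_seq_mem (s : seq T) x0 : x0 \in s -> \big[Order.min/x0]_(x <- s) x \in s.
Proof.
by move=> x0s; rewrite big_seq; elim/big_ind: _ => // x y; rewrite /Order.min; case: ifP.
Qed.

Lemma bigmax_seq_mem (s : seq T) x0 : x0 \in s -> \big[Order.max/x0]_(x <- s) x \in s.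
Proof.
by move=> x0s; rewrite big_seq; elim/big_ind: _ => // x y; rewrite /Order.max; case: ifP.
Qed.

End BigMinMaxMem.

Section IntFinsets.
Implicit Types (A : {fset int}) (k j x : int).

Lemma maxR_mem A : A != fset0 -> maxR A \in A.
Proof.
case/fset0Pn=> x; change (x \in enum_fset A -> maxR A \in enum_fset A).
by rewrite /maxR; case: (enum_fset A) => [|a s] // _; apply/bigmax_seq_mem/mem_head.
Qed.

Lemma le_maxR A x : x \in A -> x <= maxR A.
Proof. by move=> xA; apply: le_bigmax_seq. Qed.

Lemma minR_mem A : A != fset0 -> minR A \in A.
Proof.
case/fset0Pn=> x; change (x \in enum_fset A -> minR A \in enum_fset A).
by rewrite /minR; case: (enum_fset A) => [|a s] // _; apply/bigmin_seq_mem/mem_head.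
Qed.

Lemma minR_le A x : x \in A -> minR A <= x.
Proof. by move=> xA; apply: ge_bigmin_seq. Qed.

Lemma succR_None A k : succR A k = None -> forall x, x \in A -> x <= k.
Proof.
rewrite /succR; case E: [seq x <- _ | _] => [|//] _ x xA.
by rewrite leNgt; apply: contra_eqN E => kx; rewrite -has_filter; apply/hasP; exists x.
Qed.

Lemma predR_None A k : predR A k = None -> forall x, x \in A -> k <= x.
Proof.
rewrite /predR; case E: [seq x <- _ | _] => [|//] _ x xA.
by rewrite leNgt; apply: contra_eqN E => xk; rewrite -has_filter; apply/hasP; exists x.
Qed.

Lemma succR_Some A k j : succR A k = Some j ->
  [/\ j \in A, k < j & forall x, x \in A -> k < x -> j <= x].
Proof.
rewrite /succR; case E: [seq x <- _ | _] => [//|a s] [<-].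
have : \big[Num.min/a]_(x <- a :: s) x \in [seq x <- enum_fset A | k < x].
  by rewrite E; apply/bigmin_seq_mem/mem_head.
rewrite mem_filter => /andP[kj jA].
split=> // x xA kx; apply: ge_bigmin_seq => //.
by rewrite -E mem_filter kx.
Qed.

Lemma predR_Some A k j : predR A k = Some j ->
  [/\ j \in A, j < k & forall x, x \in A -> x < k -> x <= j].
Proof.
rewrite /predR; case E: [seq x <- _ | _] => [//|a s] [<-].
have : \big[Num.max/a]_(x <- a :: s) x \in [seq x <- enum_fset A | x < k].
  by rewrite E; apply/bigmax_seq_mem/mem_head.
rewrite mem_filter => /andP[jk jA].
split=> // x xA xk; apply: le_bigmax_seq => //.
by rewrite -E mem_filter xk.
Qed.

Lemma succR_eq A k j : j \in A -> k < j -> (forall x, x \in A -> k < x -> j <= x) ->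
  succR A k = Some j.
Proof.
move=> jA kj jmin; case E: (succR A k) => [j'|]; last by have := succR_None E jA; lia.
have [j'A kj' j'min] := succR_Some E.
by congr Some; apply/le_anti; rewrite j'min ?jmin.
Qed.

Lemma predR_eq A k j : j \in A -> j < k -> (forall x, x \in A -> x < k -> x <= j) ->
  predR A k = Some j.
Proof.
move=> jA jk jmax; case E: (predR A k) => [j'|]; last by have := predR_None E jA; lia.
have [j'A j'k j'max] := predR_Some E.
by congr Some; apply/le_anti; rewrite j'max ?jmax.
Qed.

Lemma succR_predR A k j : k \in A -> predR A k = Some j -> succR A j = Some k.
Proof.
move=> kA /predR_Some[_ jk jmax]; apply: succR_eq => // x xA jx.
by rewrite leNgt; apply/negP => /(jmax _ xA); lia.
Qed.

Lemma predR_above_max A k : A != fset0 -> maxR A < k -> predR A k = Some (maxR A).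
Proof. by move=> A0 Ak; apply: predR_eq => // [|x /le_maxR]; rewrite ?maxR_mem. Qed.

End IntFinsets.

Section Labelings.
Variables (d : Order.disp_t) (P : finPOrderType d).

Lemma cover_homo_lt (dT : Order.disp_t) (T : porderType dT) (f : P -> T) :
  (forall x y, pcover x y -> (f x < f y)%O) -> {homo f : x y / (x < y)%O}.
Proof.
move=> fcov x y; have [n] := ubnP #|[set z | (x < z < y)%O]|.
elim: n x y => // n IH x y; rewrite ltnS => hn xy.
case: (boolP [exists z, (x < z < y)%O]) => [/existsP[z /andP[xz zy]]|nz]; last first.
  by apply: fcov; rewrite /pcover xy.
have xz_sub : [set w | (x < w < z)%O] \proper [set w | (x < w < y)%O].
  apply/properP; split; last by exists z; rewrite !inE ?xz ?zy ?ltxx ?andbF.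
  by apply/subsetP => w; rewrite !inE => /andP[-> /lt_trans->].
have zy_sub : [set w | (z < w < y)%O] \proper [set w | (x < w < y)%O].
  apply/properP; split; last by exists z; rewrite !inE ?xz ?zy ?ltxx.
  by apply/subsetP => w; rewrite !inE => /andP[/(lt_trans xz)-> ->].
apply: (lt_trans (IH x z _ xz) (IH z y _ zy)).
  exact: leq_trans (proper_card xz_sub) hn.
exact: leq_trans (proper_card zy_sub) hn.
Qed.

Variable R : P -> {fset int}.
Implicit Types (f g h : {ffun P -> int}).

Lemma inc_labP f : reflect
  ((forall p, f p \in R p) /\ {homo f : p q / (p < q)%O >-> p < q}) (inc_lab R f).
Proof.
apply: (iffP andP) => [[/forallP fR /forallP fmono]|[fR fmono]]; split=> //.
- by move=> p q; move/forallP: (fmono p) => /(_ q) /implyP.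
- exact/forallP.
- by apply/forallP => p; apply/forallP => q; apply/implyP => /fmono.
Qed.

Lemma updE f p v q : upd f p v q = if q == p then v else f q.
Proof. by rewrite ffunE. Qed.

Lemma upd_id f p : upd f p (f p) = f.
Proof. by apply/ffunP => q; rewrite updE; case: eqP => [->|]. Qed.

Lemma upd_incP f p v : inc_lab R f -> reflect
  [/\ v \in R p, forall q, (q < p)%O -> f q < v & forall q, (p < q)%O -> v < f q]
  (inc_lab R (upd f p v)).
Proof.
move=> /inc_labP[fR fmono]; apply: (iffP (inc_labP (upd f p v))) => [[uR umono]|[vR below above]].
  have neq q : (q < p)%O || (p < q)%O -> (q == p) = false.
    by apply: contraTF => /eqP->; rewrite ltxx.
  split; first by have := uR p; rewrite updE eqxx.
    by move=> q qp; have := umono _ _ qp; rewrite !updE eqxx neq ?qp.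
  by move=> q pq; have := umono _ _ pq; rewrite !updE eqxx neq ?pq ?orbT.
split=> [q|q q']; first by rewrite updE; case: eqP => [->|].
rewrite !updE; case: (eqVneq q p) => [->|_]; case: (eqVneq q' p) => [->|_] //.
- by rewrite ltxx.
- exact: above.
- exact: below.
- exact: fmono.
Qed.

Lemma upd_inc_aboveP f p v : inc_lab R f -> f p <= v ->
  reflect (v \in R p /\ forall q, (p < q)%O -> v < f q) (inc_lab R (upd f p v)).
Proof.
move=> fi fpv; have /inc_labP[_ fmono] := fi.
apply: (iffP (upd_incP _ _ fi)) => [[]|[vR above]]; split=> // q /fmono; lia.
Qed.

Lemma upd_inc_belowP f p v : inc_lab R f -> v <= f p ->
  reflect (v \in R p /\ forall q, (q < p)%O -> f q < v) (inc_lab R (upd f p v)).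
Proof.
move=> fi vfp; have /inc_labP[_ fmono] := fi.
apply: (iffP (upd_incP _ _ fi)) => [[]|[vR below]]; split=> // q /fmono; lia.
Qed.

End Labelings.

Section GammaPoset.
Variables (d : Order.disp_t) (P : finPOrderType d) (R : P -> {fset int}).
Local Notation Gamma := (Gamma R).
Local Notation HGamma := (@HGamma _ _ R).
Implicit Types (x y z : Gamma) (I : {set Gamma}) (f g h : {ffun P -> int}).

Definition point x : P := (ssval x).1.

Lemma ssvalE x : ssval x = (point x, HGamma x).
Proof. exact: surjective_pairing. Qed.

Lemma mem_gamma_seq p k : ((p, k) \in gamma_seq R) = (k \in R p) && (k != maxR (R p)).
Proof.
apply/flattenP/andP => [[_ /mapP[q _ ->] /mapP[k' + [-> ->]]]|[kR kmax]].
  by rewrite mem_filter => /andP[].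
exists [seq (p, k) | k <- [seq k <- enum_fset (R p) | k != maxR (R p)]].
  by apply: map_f; rewrite mem_enum.
by apply: map_f; rewrite mem_filter kmax.
Qed.

Lemma gamma_valP x : (HGamma x \in R (point x)) && (HGamma x != maxR (R (point x))).
Proof. by case: x => -[p k] h; rewrite -mem_gamma_seq. Qed.

Lemma HGamma_mem x : HGamma x \in R (point x).
Proof. by case/andP: (gamma_valP x). Qed.

Lemma HGamma_lt_max x : HGamma x < maxR (R (point x)).
Proof. by case/andP: (gamma_valP x) => /le_maxR; rewrite lt_neqAle => -> ->. Qed.

Lemma is_idealP I : reflect (forall x y, gcov x y -> y \in I -> x \in I) (is_ideal I).
Proof.
apply: (iffP forallP) => [Iideal x y xy yI|Iclosed x].
  by move/forallP: (Iideal x) => /(_ y) /implyP; apply; rewrite /gle connect1.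
apply/forallP => y; apply/implyP => /andP[/connectP[s + ->]].
by elim: s x => [|z s IH] x //= /andP[xz /IH zI] /zI /(Iclosed _ _ xz).
Qed.

Lemma gcov_fiber x y : point x = point y ->
  succR (R (point x)) (HGamma y) = Some (HGamma x) -> gcov x y.
Proof. by rewrite /gcov (ssvalE x) (ssvalE y) /= => -> ->; rewrite !eqxx. Qed.

Lemma gcov_cover x y : pcover (point x) (point y) ->
  predR (R (point x)) (HGamma y) = Some (HGamma x) ->
  ~~ has (fun k => (HGamma y < k) && (predR (R (point x)) k == Some (HGamma x)))
         (enum_fset (R (point y))) ->
  gcov x y.
Proof.
move=> xy pred_y top; rewrite /gcov (ssvalE x) (ssvalE y) /=.
by case/andP: (gamma_valP x) => _ ->; rewrite xy pred_y eqxx top orbT.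
Qed.

Lemma toggle_stuck_in I x y : x \in I -> gcov x y -> y \in I -> y != x -> toggle x I = I.
Proof.
move=> xI xy yI yx; rewrite /toggle xI /=; case: ifP => // /is_idealP Iclosed.
by have := Iclosed _ _ xy; rewrite !inE eqxx yx yI => /(_ isT).
Qed.

Lemma toggle_stuck_out I x z : x \notin I -> gcov z x -> z \notin I -> z != x ->
  toggle x I = I.
Proof.
move=> xI zx zI zneq; rewrite /toggle xI /=; case: ifP => [/is_idealP Iclosed|].
  by have := Iclosed _ _ zx; rewrite !inE eqxx (negbTE zneq) (negbTE zI) => /(_ isT).
by rewrite (negbTE xI).
Qed.

Definition ideal_of (f : {ffun P -> int}) : {set Gamma} :=
  [set x | f (point x) <= HGamma x].

Lemma ideal_of_ideal f : inc_lab R f -> is_ideal (ideal_of f).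
Proof.
case/inc_labP=> fR fmono; apply/is_idealP => x y; rewrite !inE /gcov (ssvalE x) (ssvalE y) /=.
case/orP=> [/andP[/eqP-> /eqP/succR_Some[_ yx _]]|]; first by lia.
case/and4P=> /andP[xy _] /eqP/predR_Some[_ _ xmax] _ _ fy.
by apply: xmax => //; have := fmono _ _ xy; lia.
Qed.

Lemma ideal_of_inj f g : (forall p, f p \in R p) -> (forall p, g p \in R p) ->
  ideal_of f = ideal_of g -> f = g.
Proof.
suff le_fg f' g' : (forall p, f' p \in R p) -> (forall p, g' p \in R p) ->
    ideal_of f' = ideal_of g' -> forall p, f' p <= g' p.
  by move=> fR gR E; apply/ffunP => p; apply/le_anti; rewrite !le_fg.
move=> fR gR E p; rewrite leNgt; apply/negP => gf.
have gp_ne_max : g' p != maxR (R p) by have := le_maxR (fR p); lia.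
have hm : (p, g' p) \in gamma_seq R by rewrite mem_gamma_seq gR.
have : SeqSub hm \in ideal_of g' by rewrite inE.
by rewrite -E inE; change (f' p <= g' p -> False); lia.
Qed.

Hypothesis R_nonempty : restriction R.

Definition fiber_levels I p : {fset int} :=
  [fset k in R p | (k == maxR (R p)) || [exists x in I, (point x == p) && (HGamma x == k)]]%fset.

Definition lab_of I : {ffun P -> int} := [ffun p => minR (fiber_levels I p)].

Lemma lab_of_fiber_levels I p : lab_of I p \in fiber_levels I p.
Proof.
rewrite ffunE; apply/minR_mem/fset0Pn; exists (maxR (R p)).
by rewrite !inE eqxx maxR_mem.
Qed.

Lemma lab_of_mem I p : lab_of I p \in R p.
Proof. by have := lab_of_fiber_levels I p; rewrite !inE => /andP[]. Qed.

Lemma ideal_up I x y : is_ideal I -> x \in I -> point x = point y -> HGamma x <= HGamma y ->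
  y \in I.
Proof.
move=> /is_idealP Iclosed xI; have [n] := ubnP `|HGamma y - HGamma x|%N.
elim: n y => // n IH y; rewrite ltnS => hn xy xley.
have [e|neq] := eqVneq (HGamma y) (HGamma x).
  by have -> : y = x by apply: val_inj; rewrite /= !ssvalE xy e.
have yR := HGamma_mem y; have xR := HGamma_mem x; rewrite xy in xR.
case E: (predR (R (point y)) (HGamma y)) => [k|]; last by have := predR_None E xR; lia.
have [kR ky kmax] := predR_Some E.
have xk : HGamma x <= k by apply: kmax; rewrite // lt_neqAle eq_sym neq.
have k_ne_max : k != maxR (R (point y)) by have := HGamma_lt_max y; lia.
have hm : (point y, k) \in gamma_seq R by rewrite mem_gamma_seq kR.
apply: (Iclosed y (SeqSub hm)); first exact/gcov_fiber/(succR_predR yR).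
by apply: IH => //; change (HGamma (SeqSub hm)) with k; lia.
Qed.

Lemma mem_lab_of I x : is_ideal I -> (x \in I) = (lab_of I (point x) <= HGamma x).
Proof.
move=> Iideal; apply/idP/idP => [xI|].
  rewrite ffunE; apply: minR_le; rewrite !inE HGamma_mem /=; apply/orP; right.
  by apply/existsP; exists x; rewrite xI !eqxx.
have := lab_of_fiber_levels I (point x); rewrite !inE => /andP[_ /orP[/eqP->|]].
  by have := HGamma_lt_max x; lia.
case/existsP=> y /and3P[yI /eqP yx /eqP <-].
exact: ideal_up yI yx.
Qed.

Lemma lab_ofK I : is_ideal I -> ideal_of (lab_of I) = I.
Proof. by move=> Iideal; apply/setP => x; rewrite inE mem_lab_of. Qed.

Hypothesis R_consistent : consistent R.

Lemma ideal_cover_closed I x y : is_ideal I -> pcover (point x) (point y) ->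
  predR (R (point x)) (HGamma y) = Some (HGamma x) -> y \in I -> x \in I.
Proof.
move=> Iideal xy pred_y yI; set p1 := point x in xy pred_y *; set p2 := point y in xy.
(* Condition (2) of a cover of Gamma forces the largest level of p2 above HGamma y with
   predecessor HGamma x in R p1. *)
set T := [fset k in R p2 | (HGamma y <= k) && (predR (R p1) k == Some (HGamma x))]%fset.
have T0 : T != fset0 by apply/fset0Pn; exists (HGamma y); rewrite !inE HGamma_mem lexx pred_y /=.
have /[!inE] /andP[topR /andP[y_le_top /eqP pred_top]] := maxR_mem T0.
set top := maxR T in topR y_le_top pred_top.
have top_ne_max : top != maxR (R p2).
  apply: contra_eq_neq pred_top => ->.
  rewrite predR_above_max ?(R_consistent xy).2 //; apply/eqP => -[x_max].
  by have := HGamma_lt_max x; rewrite -x_max ltxx.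
have hm : (p2, top) \in gamma_seq R by rewrite mem_gamma_seq topR.
apply: (is_idealP _ Iideal x (SeqSub hm)); last by apply: (ideal_up Iideal yI).
apply: gcov_cover => //; apply/hasPn => k kR; apply/negP => /andP[top_k pred_k].
have : k \in T by rewrite !inE kR pred_k (le_trans y_le_top (ltW top_k)).
by move/le_maxR; rewrite leNgt top_k.
Qed.

Lemma lab_of_inc I : is_ideal I -> inc_lab R (lab_of I).
Proof.
move=> Iideal; apply/inc_labP; split; first exact: lab_of_mem.
apply: cover_homo_lt => p1 p2 cov; have [min_lt max_lt] := R_consistent cov.
have le_max1 := le_maxR (lab_of_mem I p1).
have := lab_of_fiber_levels I p2; rewrite !inE => /andP[_ /orP[/eqP->|]]; first by lia.
case/existsP=> y /and3P[yI /eqP yp2 /eqP yk]; rewrite -yk.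
have min1 := minR_mem (R_nonempty p1); have min2 := minR_le (HGamma_mem y); rewrite yp2 in min2.
case E: (predR (R p1) (HGamma y)) => [k|]; last by have := predR_None E min1; lia.
have [kR ky _] := predR_Some E.
have [k_max|k_ne_max] := eqVneq k (maxR (R p1)); first by lia.
have hm : (p1, k) \in gamma_seq R by rewrite mem_gamma_seq kR.
have : SeqSub hm \in I by apply: (ideal_cover_closed Iideal _ _ yI); rewrite ?yp2.
by rewrite mem_lab_of //; change (lab_of I p1 <= k -> lab_of I p1 < HGamma y); lia.
Qed.

Lemma is_ideal_ideal_of h : (forall p, h p \in R p) -> is_ideal (ideal_of h) = inc_lab R h.
Proof.
move=> hR; apply/idP/idP => [Iideal|]; last exact: ideal_of_ideal.
by rewrite -(ideal_of_inj (lab_of_mem _) hR (lab_ofK Iideal)) lab_of_inc.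
Qed.

Lemma ideal_of_upd g x j : succR (R (point x)) (HGamma x) = Some j ->
  ideal_of (upd g (point x) (HGamma x)) = x |: ideal_of (upd g (point x) j) /\
  x \notin ideal_of (upd g (point x) j).
Proof.
move=> /succR_Some[jR xj jmin]; split; last by rewrite inE updE eqxx -ltNge.
apply/setP => z; rewrite !inE !updE; have [zx|zx] := eqVneq (point z) (point x); last first.
  by have -> : (z == x) = false by apply: contraNF zx => /eqP->.
have [->|neq] := eqVneq z x; first by rewrite lexx.
have zR := HGamma_mem z; rewrite zx in zR.
have zxi : HGamma z != HGamma x.
  by apply: contra neq => /eqP e; apply/eqP/val_inj; rewrite /= !ssvalE zx e.
by rewrite le_eqVlt eq_sym (negbTE zxi) /=; apply/idP/idP => [/jmin->|] //; lia.
Qed.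

Lemma toggle_ideal_of_fixed g x j : (forall p, g p \in R p) ->
  succR (R (point x)) (HGamma x) = Some j ->
  g (point x) != HGamma x -> g (point x) != j -> toggle x (ideal_of g) = ideal_of g.
Proof.
move=> gR Ej gx gj; have [jR xj jmin] := succR_Some Ej; have gxR := gR (point x).
have [g_lt|g_ge] := ltP (g (point x)) (HGamma x).
  case E: (predR (R (point x)) (HGamma x)) => [k|]; last by have := predR_None E gxR; lia.
  have [kR kx kmax] := predR_Some E.
  have k_ne_max : k != maxR (R (point x)) by have := HGamma_lt_max x; lia.
  have hm : (point x, k) \in gamma_seq R by rewrite mem_gamma_seq kR.
  apply: (toggle_stuck_in (y := SeqSub hm)); rewrite ?inE.
  - exact: ltW.
  - exact/gcov_fiber/(succR_predR (HGamma_mem x)).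
  - exact: kmax.
  - by apply: contraTneq kx => <-; rewrite ltxx.
have j_lt_g : j < g (point x) by rewrite lt_neqAle eq_sym gj jmin // lt_neqAle eq_sym gx.
have j_ne_max : j != maxR (R (point x)) by have := le_maxR gxR; lia.
have hm : (point x, j) \in gamma_seq R by rewrite mem_gamma_seq jR.
apply: (toggle_stuck_out (z := SeqSub hm)); rewrite ?inE -?ltNge //.
- exact: lt_trans xj j_lt_g.
- exact: gcov_fiber.
- by apply: contraTneq xj => <-; rewrite ltxx.
Qed.

Lemma rho_inc g i p : inc_lab R g -> inc_lab R (upd g p (rho R i g p)).
Proof.
move=> gi; rewrite ffunE; case: succR => [j|]; last by rewrite upd_id.
by do 2?case: ifP => [/andP[] //|_]; rewrite upd_id.
Qed.

Lemma toggle_ideal_of g x : inc_lab R g ->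
  toggle x (ideal_of g) = ideal_of (upd g (point x) (rho R (HGamma x) g (point x))).
Proof.
move=> /inc_labP[gR _].
have updR v : v \in R (point x) -> forall q, upd g (point x) v q \in R q.
  by move=> vR q; rewrite updE; case: eqP => [->|].
case Ej: (succR (R (point x)) (HGamma x)) => [j|]; last first.
  by have := succR_None Ej (maxR_mem (R_nonempty _)); have := HGamma_lt_max x; lia.
have [jR xj _] := succR_Some Ej; have [up notin] := ideal_of_upd g Ej.
rewrite ffunE Ej; case: eqP => [gx|/eqP gx] /=.
  rewrite -[in LHS](upd_id g (point x)) gx up /toggle setU11 /= setU1K //.
  rewrite is_ideal_ideal_of; last exact: updR.
  by case: (inc_lab R _) => //; rewrite -up; case: ifP.
case: eqP => [gj|/eqP gj] /=; last by rewrite upd_id; apply: toggle_ideal_of_fixed Ej _ _.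
rewrite -[in LHS](upd_id g (point x)) gj /toggle (negbTE notin) -up /=.
rewrite is_ideal_ideal_of; last exact/updR/HGamma_mem.
by case: (inc_lab R _).
Qed.

Lemma rho_moved f i q : rho R i f q != f q ->
  (f q = i /\ i < rho R i f q) \/ (i < f q /\ rho R i f q = i).
Proof.
rewrite ffunE; case Ej: succR => [j|]; last by rewrite eqxx.
have [_ ij _] := succR_Some Ej.
by do 2?case: ifP => [/andP[/eqP-> _] _|_]; [left | right | rewrite eqxx].
Qed.

Lemma rho_local f h i p : inc_lab R f -> inc_lab R h -> h p = f p ->
  (forall q, h q = f q \/ h q = rho R i f q) -> rho R i h p = rho R i f p.
Proof.
move=> fi hi hp hf; have /inc_labP[_ fmono] := fi; have /inc_labP[_ hmono] := hi.
have moved q : h q != f q -> (f q = i /\ i < h q) \/ (i < f q /\ h q = i).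
  case: (hf q) => ->; first by rewrite eqxx.
  exact: rho_moved.
rewrite !ffunE hp; case Ej: (succR (R p) i) => [j|] //; have [_ ij _] := succR_Some Ej.
have raise : (f p == i) && inc_lab R (upd h p j) = (f p == i) && inc_lab R (upd f p j).
  case: eqP => //= fpi.
  have above q : (p < q)%O -> h q = f q.
    move=> pq; apply/eqP/negP => /negP/moved[[fq _]|[_ hq]].
      by have := fmono _ _ pq; lia.
    by have := hmono _ _ pq; lia.
  have [hpj fpj] : h p <= j /\ f p <= j by lia.
  apply/(upd_inc_aboveP hi hpj)/(upd_inc_aboveP fi fpj).
    by case=> jR jh; split=> // q pq; rewrite -above ?jh.
  by case=> jR jf; split=> // q pq; rewrite above ?jf.
have lower : (f p == j) && inc_lab R (upd h p i) = (f p == j) && inc_lab R (upd f p i).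
  case: eqP => //= fpj.
  have below q : (q < p)%O -> (h q < i) = (f q < i).
    move=> qp; have [->//|/moved[[-> iq]|[iq ->]]] := eqVneq (h q) (f q).
      by rewrite ltxx ltNge ltW.
    by rewrite ltxx ltNge ltW.
  have [ihp ifp] : i <= h p /\ i <= f p by lia.
  apply/(upd_inc_belowP hi ihp)/(upd_inc_belowP fi ifp).
    by case=> iR ih; split=> // q qp; rewrite -below ?ih.
  by case=> iR if_; split=> // q qp; rewrite below ?if_.
by rewrite raise lower.
Qed.

Lemma rho_outside f i p : (forall q, f q \in R q) -> (p, i) \notin gamma_seq R ->
  rho R i f p = f p.
Proof.
move=> fR; rewrite mem_gamma_seq negb_and negbK ffunE => out.
case Ej: succR => [j|] //; have [jR ij _] := succR_Some Ej.
have iR : i \notin R p by case/orP: out => // /eqP imax; have := le_maxR jR; lia.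
have fpi : (f p == i) = false by apply: contraNF iR => /eqP <-.
have noinc : inc_lab R (upd f p i) = false.
  by apply: contraNF iR => /inc_labP[/(_ p)]; rewrite updE eqxx.
by rewrite fpi noinc andbF.
Qed.

Definition rho_on (S : seq P) i f : {ffun P -> int} :=
  [ffun q => if q \in S then rho R i f q else f q].

Lemma foldl_toggle_rho_on f i (S : seq P) (L : seq Gamma) :
  inc_lab R f -> inc_lab R (rho_on S i f) ->
  all (fun x => HGamma x == i) L -> uniq (map point L) -> all (fun x => point x \notin S) L ->
  foldl (fun J x => toggle x J) (ideal_of (rho_on S i f)) L =
    ideal_of (rho_on (S ++ map point L) i f) /\
  inc_lab R (rho_on (S ++ map point L) i f).
Proof.
move=> fi; elim: L S => [|x L IH] S Si /=; first by rewrite cats0.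
case/andP=> /eqP xi Li /andP[xL Lu] /andP[xS LS].
have step : upd (rho_on S i f) (point x) (rho R (HGamma x) (rho_on S i f) (point x)) =
    rho_on (rcons S (point x)) i f.
  rewrite xi (rho_local fi Si); first last.
  - by move=> q; rewrite ffunE; case: ifP; [right | left].
  - by rewrite ffunE (negbTE xS).
  by apply/ffunP => q; rewrite !ffunE mem_rcons inE; case: eqVneq => [->|].
rewrite toggle_ideal_of // step -cat_rcons; apply: IH => //.
  by rewrite -step rho_inc.
apply/allP => y yL; rewrite mem_rcons inE negb_or (allP LS _ yL) andbT.
by apply: contraNneq xL => <-; apply: map_f.
Qed.

Lemma Tog_ideal_of f i : inc_lab R f ->
  Tog HGamma i (ideal_of f) = ideal_of (rho R i f) /\ inc_lab R (rho R i f).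
Proof.
move=> fi; have /inc_labP[fR _] := fi.
set L := [seq x <- enum Gamma | HGamma x == i].
have f0 : rho_on [::] i f = f by apply/ffunP => q; rewrite ffunE.
have fL : rho_on (map point L) i f = rho R i f.
  apply/ffunP => q; rewrite ffunE; case: ifP => // qL; rewrite rho_outside //.
  apply: contraFN qL => hm; apply/mapP; exists (SeqSub hm) => //.
  by rewrite mem_filter mem_enum andbT; apply: eqxx.
have := @foldl_toggle_rho_on f i [::] L fi; rewrite f0 fL; apply=> //.
- exact: filter_all.
- rewrite map_inj_in_uniq ?filter_uniq ?index_enum_uniq // => x y.
  rewrite !mem_filter => /andP[/eqP xi _] /andP[/eqP yi _] e.
  by apply: val_inj; rewrite /= !ssvalE e xi yi.
- by apply/allP.
Qed.

Lemma foldl_rho_ideal_of (s : seq int) f : inc_lab R f ->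
  inc_lab R (foldl (fun g i => rho R i g) f s) /\
  ideal_of (foldl (fun g i => rho R i g) f s) = foldl (fun J i => Tog HGamma i J) (ideal_of f) s.
Proof.
elim: s f => [|i s IH] f fi //=.
by have [-> /IH] := Tog_ideal_of i fi.
Qed.

Local Notation Hvalues := [seq HGamma x | x <- enum Gamma].

Lemma Tog_id i I : i \notin Hvalues -> Tog HGamma i I = I.
Proof.
move=> iH; rewrite /Tog (@eq_in_filter _ _ pred0) ?filter_pred0 // => x _.
by apply: contraNF iH => /eqP <-; apply: map_f; rewrite mem_enum.
Qed.

Lemma foldl_Tog_filter (s : seq int) I :
  foldl (fun J i => Tog HGamma i J) I s =
  foldl (fun J i => Tog HGamma i J) I [seq i <- s | i \in Hvalues].
Proof.
elim: s I => [|i s IH] I //=.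
by case: ifP => iH /=; rewrite -IH // Tog_id ?iH.
Qed.

Lemma Hvalues_irange i : i \in Hvalues -> i \in irange R.
Proof.
case/mapP=> x _ ->; have xR := HGamma_mem x.
have lo_le : lo R <= minR (R (point x)) by apply: bigmin_le.
have le_hi : maxR (R (point x)) <= hi R by apply: le_bigmax.
have := minR_le xR; have := le_maxR xR => x_le_max min_le_x.
apply/mapP; exists `|HGamma x - lo R|%N; first by rewrite mem_iota /=; lia.
lia.
Qed.

Lemma irange_Hvalues : [seq i <- irange R | i \in Hvalues] = sort <=%R (undup Hvalues).
Proof.
apply: (@irr_sorted_eq _ <%R); [exact: lt_trans | exact: ltxx | | | ].
- apply: sorted_filter; first exact: lt_trans.
  apply: (@homo_sorted _ _ _ ltn); last exact: iota_ltn_sorted.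
  by move=> a b /= ab; lia.
- by rewrite lt_sorted_uniq_le sort_uniq undup_uniq sort_sorted //; apply: le_total.
- move=> a; rewrite mem_filter mem_sort mem_undup.
  by case: (boolP (a \in Hvalues)) => //= /Hvalues_irange.
Qed.

End GammaPoset.

Theorem theorem4p31 (d : Order.disp_t) (P : finPOrderType d)
  (R : P -> {fset int}) :
  restriction R -> consistent R ->
  exists phi : {ffun P -> int} -> {set Gamma R},
    [/\ forall f, inc_lab R f -> is_ideal (phi f),
        forall f g, inc_lab R f -> inc_lab R g -> phi f = phi g -> f = g,
        forall I, is_ideal I -> exists2 f, inc_lab R f & phi f = I
      & forall f, inc_lab R f ->
          inc_lab R (IncPro R f) /\
          phi (IncPro R f) = TogPro (@HGamma _ _ R) (phi f)].
Proof.
move=> R_nonempty R_consistent; exists (ideal_of R); split.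
- exact: ideal_of_ideal.
- by move=> f g /inc_labP[fR _] /inc_labP[gR _]; apply: ideal_of_inj.
- by move=> I Iideal; exists (lab_of I); [apply: lab_of_inc | apply: lab_ofK].
- move=> f fi; have [inc_f ideal_f] := foldl_rho_ideal_of R_nonempty R_consistent (irange R) fi.
  by split=> //; rewrite /IncPro ideal_f foldl_Tog_filter irange_Hvalues.
Qed.
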